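(* Let $k\ge 0$ be an integer, $N_o=2^k$, and let $\mathbf{P}_k=\mathbf{P}^{\otimes k}$ be the $k$-th Kronecker power of $\mathbf{P}=\begin{bmatrix}1&0\\1&1\end{bmatrix}$ over $\mathrm{GF}(2)$ (with $\mathbf{P}_0=[1]$). Let $\mathbf{c}=(c_0,\dots,c_m)\in\{0,1\}^{m+1}$ with $c_0=1$, and fix an arbitrary initial shift-register state $\mathbf{s}=(s_0,\dots,s_{m-1})\in\{0,1\}^m$. For $b\in\{0,1\}$, let $\mathbf{v}^{(b)}=(v_0,\dots,v_{N_o-1})$ be the message vector with $v_0=\dots=v_{N_o-2}=0$ and $v_{N_o-1}=b$, let $\mathbf{u}^{(b)}$ be its convolutional encoding with impulse response $\mathbf{c}$ starting from state $\mathbf{s}$, and let $\boldsymbol{\beta}_b=\mathbf{u}^{(b)}\mathbf{P}_k$. Then $\boldsymbol{\beta}_0\oplus\boldsymbol{\beta}_1=\mathbf{1}$, the all-ones vector of length $N_o$.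
   Context: All arithmetic is over $\mathrm{GF}(2)$; vectors are row vectors and rows/columns of $\mathbf{P}_k$ are indexed $0,\dots,N_o-1$. Convolutional encoding of $\mathbf{v}=(v_0,\dots,v_{N_o-1})$ with impulse response $\mathbf{c}$ from state $\mathbf{s}$ is defined sequentially for $i=0,\dots,N_o-1$: $u_i = c_0 v_i \oplus \bigoplus_{j=1}^{m} c_j s_{j-1}$, after which the state is updated to $\mathbf{s}\leftarrow(v_i,s_0,\dots,s_{m-2})$. (This setting is a ''Rev node'' of a polarization-adjusted convolutional code: the first $N_o-1$ message bits are frozen to zero and only the last one is an information bit.) *)

From mathcomp Require Import all_boot all_algebra.
From mathcomp Require Export mxtens.
Set Implicit Arguments. Unset Strict Implicit. Unset Printing Implicit Defensive.
Import GRing.Theory.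
Local Open Scope ring_scope.

(* The polarization kernel P = [[1,0],[1,1]] over GF(2). *)
Definition Pker : 'M['F_2]_2 :=
  \matrix_(i < 2, j < 2) (if (i == 0 :> nat) && (j == 1 :> nat) then 0 else 1).

Definition Pk (k : nat) : 'M['F_2]_(2 ^ k) := ntensmx Pker k.

(* Convolutional encoding, sequentially as in the paper:
   u_i = c_0 v_i + sum_{j=1}^m c_j s_{j-1}, then s <- (v_i, s_0, ..., s_{m-2}).
   Here c has size m+1 and s has size m. *)
Fixpoint conv_enc (c s v : seq 'F_2) : seq 'F_2 :=
  match v with
  | [::] => [::]
  | x :: v' =>
      (c`_0 * x + \sum_(1 <= j < size c) c`_j * s`_(j.-1))
        :: conv_enc c (take (size s) (x :: s)) v'
  end.

Definition rev_msg (N : nat) (b : 'F_2) : seq 'F_2 :=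
  [seq (if i == N.-1 then b else 0) | i <- iota 0 N].

Definition rev_codeword (k m : nat) (c : (m.+1).-tuple 'F_2) (s : m.-tuple 'F_2)
  (b : 'F_2) : 'rV['F_2]_(2 ^ k) :=
  \row_(i < 2 ^ k) (conv_enc c s (rev_msg (2 ^ k) b))`_i.

Definition beta (k m : nat) (c : (m.+1).-tuple 'F_2) (s : m.-tuple 'F_2)
  (b : 'F_2) : 'rV['F_2]_(2 ^ k) :=
  rev_codeword k c s b *m Pk k.

(** The two messages differ only in the last bit, and the convolutional
    encoder is causal with [c_0 = 1], so [u^(0) + u^(1)] is the last unit
    vector [e_(N_o - 1)]. Hence [beta_0 + beta_1] is the last row of [P_k];
    the last row of [P] is all ones, and this property is inherited by
    Kronecker products and hence by every Kronecker power. *)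

From mathcomp Require Import all_boot all_algebra zify.
Set Implicit Arguments. Unset Strict Implicit. Unset Printing Implicit Defensive.
Import GRing.Theory.
Local Open Scope ring_scope.

Definition last_row_ones (R : pzRingType) (m n : nat) (A : 'M[R]_(m, n)) :=
  forall (i : 'I_m) (j : 'I_n), i = m.-1 :> nat -> A i j = 1.

Lemma mixed_radix_last a b m p :
  (a < m -> b < p -> a * p + b = (m * p).-1 -> a = m.-1 /\ b = p.-1)%N.
Proof.
case: m => [|m] // lt_a lt_b; rewrite mulSn => last_ab.
have p_gt0 : (0 < p)%N by apply: leq_ltn_trans lt_b.
have le_m : (m <= a)%N by rewrite -(leq_pmul2r p_gt0); lia.
have eq_a : a = m by lia.
by subst a; lia.
Qed.

Lemma tensmx_last_row_ones (R : pzRingType) (m n p q : nat)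
    (A : 'M[R]_(m, n)) (B : 'M[R]_(p, q)) :
  last_row_ones A -> last_row_ones B -> last_row_ones (A *t B).
Proof.
move=> A1 B1 i j; case: (mxtens_indexP i) => i1 i2; case: (mxtens_indexP j) => j1 j2.
rewrite tensmxE /= => /mixed_radix_last[//|//|last_i1 last_i2].
by rewrite A1 // B1 // mulr1.
Qed.

Lemma ntensmx_last_row_ones (R : pzRingType) (m n : nat) (A : 'M[R]_(m, n)) k :
  last_row_ones A -> last_row_ones (A ^t k).
Proof.
move=> A1; case: k => [|k] i j.
  by rewrite [i]ord1 [j]ord1 mxE.
elim: k i j => [|k IHk] //; rewrite ntensmxSS.
exact: tensmx_last_row_ones.
Qed.

Lemma Pk_last_row_ones k : last_row_ones (Pk k).
Proof.
apply: ntensmx_last_row_ones => i j /= last_i.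
by rewrite mxE last_i andFb.
Qed.

Lemma size_conv_enc c s v : size (conv_enc c s v) = size v.
Proof. by elim: v s => [|x v IHv] s //=; rewrite IHv. Qed.

Lemma conv_enc_rcons c s p :
  exists z, forall x, conv_enc c s (rcons p x) = rcons (conv_enc c s p) (c`_0 * x + z).
Proof.
elim: p s => [|a p IHp] s /=; first by eexists.
have [z Ez] := IHp (take (size s) (a :: s)).
by exists z => x; rewrite Ez.
Qed.

Lemma rev_msgE N b : (0 < N)%N -> rev_msg N b = rcons (nseq N.-1 0) b.
Proof.
case: N => [|N] // _; rewrite /rev_msg.
have -> : iota 0 N.+1 = rcons (iota 0 N) N by rewrite -cats1 -addn1 iotaD.
rewrite map_rcons /= eqxx; congr rcons.
apply: (@eq_from_nth _ 0) => [|i]; rewrite size_map size_iota ?size_nseq // => lt_i.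
by rewrite nth_nseq lt_i (nth_map 0%N) ?size_iota // nth_iota // ltn_eqF.
Qed.

Lemma add_rev_codeword k m (c : (m.+1).-tuple 'F_2) (s : m.-tuple 'F_2)
    (i : 'I_(2 ^ k)) :
  c`_0 = 1 -> i = (2 ^ k).-1 :> nat ->
  rev_codeword k c s 0 + rev_codeword k c s 1 = 'e_i.
Proof.
move=> c0 last_i; have N_gt0 : (0 < 2 ^ k)%N by rewrite expn_gt0.
have [z Ez] := conv_enc_rcons c s (nseq (2 ^ k).-1 0).
have char2 := addrr_pchar2 (pchar_Fp (isT : prime 2)).
apply/rowP => j; rewrite !mxE !rev_msgE // !Ez !nth_rcons size_conv_enc size_nseq.
have -> : (j == i) = (j == (2 ^ k).-1 :> nat) by rewrite -last_i.
rewrite andTb.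
case: ltngtP => [_|gt_j|_]; first by rewrite char2.
  by rewrite prednK // leqNgt ltn_ord in gt_j.
by rewrite c0 mulr0 mulr1 add0r addrCA char2 addr0.
Qed.

Theorem theorem1 (k m : nat) (c : (m.+1).-tuple 'F_2) (s : m.-tuple 'F_2) :
  c`_0 = 1 ->
  beta k c s 0 + beta k c s 1 = const_mx 1.
Proof.
move=> c0; have lt_last : ((2 ^ k).-1 < 2 ^ k)%N by rewrite prednK ?expn_gt0.
rewrite /beta -mulmxDl (add_rev_codeword (i := Ordinal lt_last) _ c0) // -rowE.
by apply/matrixP => i j; rewrite !mxE; apply: Pk_last_row_ones.
Qed.
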